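(* Let $p=\sum_{i=0}^n c_ix^i$ be a polynomial with coefficients $c_i$ in the signed tropical hyperfield $\mathbb{T}\mathbb{R}$, and let $a=(+1,r)\in\mathbb{T}\mathbb{R}$ (with $r\in\mathbb{R}$) be a root of $p$. Then \[ \operatorname{mult}_a(p)=\Delta\big(\operatorname{In}^{(r)}(p)\big), \] where $\operatorname{In}^{(r)}(p)=\sum\{\operatorname{sign}(c_i)x^i : |c_i|+ir=C\}\in\mathbf{S}[x]$ with $C=\min_i(|c_i|+ir)$, and $\Delta$ denotes the number of sign changes in the sequence of coefficients, ignoring zeros.
   Context: The signed tropical hyperfield $\mathbb{T}\mathbb{R}$ has underlying set $(\{\pm1\}\times\mathbb{R})\cup\{\infty\}$. Multiplication: $(s,r)\cdot(s',r')=(ss',r+r')$, $\infty\cdot x=\infty$; the unit is $(+1,0)$ and the zero is $\infty$. For $x=(s,r)$ write $\operatorname{sign}(x)=s$, $|x|=r$, and $\operatorname{sign}(\infty)=0$, $|\infty|=\infty$; also $-(s,r)=(-s,r)$. Hyperaddition: $x\boxplus\infty=\{x\}$, and $(s,r)\boxplus(s',r')$ equals $\{(s,r)\}$ if $r<r'$, $\{(s',r')\}$ if $r'<r$, $\{(s,r)\}$ if $r=r'$ and $s=s'$, and $\{(\pm1,t):t\ge r\}\cup\{\infty\}$ if $r=r'$ and $s=-s'$; iterated sums are defined by $a_1\boxplus\cdots\boxplus a_n=\bigcup_{b\in a_1\boxplus\cdots\boxplus a_{n-1}} b\boxplus a_n$. The element $a$ is positive if its sign is $+1$. The sign hyperfield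 $\mathbf{S}=\{0,1,-1\}$ has the usual multiplication, $0\boxplus x=\{x\}$, $1\boxplus1=\{1\}$, $-1\boxplus-1=\{-1\}$, $1\boxplus-1=\{0,1,-1\}$. For a polynomial $p=\sum_{i=0}^n c_ix^i$ over a hyperfield $H$ and $a\in H$: $a$ is a root of $p$ (written $0\in p(a)$) if $0\in\boxplus_{i=0}^n c_ia^i$. Write $p\in(x-a)q$ for $q=\sum_{i=0}^{n-1}d_ix^i$ if $c_0=-ad_0$, $c_i\in(-ad_i)\boxplus d_{i-1}$ for $1\le i\le n-1$, and $c_n=d_{n-1}$. The multiplicity is defined recursively: $\operatorname{mult}_a(p)=0$ if $0\notin p(a)$, and $\operatorname{mult}_a(p)=1+\max\{\operatorname{mult}_a(q):p\in(x-a)q\}$ if $0\in p(a)$. *)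

From Stdlib Require Import Reals List ZArith ClassicalEpsilon.
Import ListNotations.
Open Scope R_scope.

(* Fin s r = (s, r) with s = true meaning sign +1, s = false meaning -1;
   Inf = the element oo (the zero of TR). *)
Inductive TR : Type :=
| Inf : TR
| Fin : bool -> R -> TR.

Definition tone : TR := Fin true 0.

Definition tmul (x y : TR) : TR :=
  match x, y with
  | Fin s r, Fin s' r' => Fin (Bool.eqb s s') (r + r')
  | _, _ => Inf
  end.

Definition topp (x : TR) : TR :=
  match x with Inf => Inf | Fin s r => Fin (negb s) r end.

Fixpoint tpow (x : TR) (n : nat) : TR :=
  match n with O => tone | S n => tmul (tpow x n) x end.

Definition hadd (x y : TR) : TR -> Prop :=
  match x, y with
  | Inf, _ => fun z => z = y
  | _, Inf => fun z => z = x
  | Fin s r, Fin s' r' =>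
      fun z =>
        if Rlt_dec r r' then z = x
        else if Rlt_dec r' r then z = y
        else if Bool.eqb s s' then z = x
        else z = Inf \/ exists (b : bool) (t : R), r <= t /\ z = Fin b t
  end.

Definition hsum (l : list TR) : TR -> Prop :=
  match l with
  | [] => fun z => z = Inf
  | a :: l' =>
      fold_left (fun (S : TR -> Prop) (y : TR) => fun z => exists b, S b /\ hadd b y z)
        l' (fun z => z = a)
  end.

(* ---------- Polynomials over TR ----------
   A polynomial p = sum_{i=0}^n c_i x^i is the list [c_0; ...; c_n]. *)
Definition coef (p : list TR) (i : nat) : TR := nth i p Inf.

Definition peval (p : list TR) (a : TR) : TR -> Prop :=
  hsum (map (fun i => tmul (coef p i) (tpow a i)) (seq 0 (length p))).

Definition is_root (a : TR) (p : list TR) : Prop := peval p a Inf.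

(* p ∈ (x - a) q, where p has degree n >= 1 (length n+1) and q has length n *)
Definition pdiv_rel (a : TR) (p q : list TR) : Prop :=
  let n := length q in
  length p = S n /\ (1 <= n)%nat /\
  coef p 0 = topp (tmul a (coef q 0)) /\
  (forall i, (1 <= i <= n - 1)%nat ->
      hadd (topp (tmul a (coef q i))) (coef q (i - 1)) (coef p i)) /\
  coef p n = coef q (n - 1).

(* maximum of a set of naturals (chosen classically; the set is nonempty and
   bounded in all uses covered by the theorem) *)
Definition natmax (P : nat -> Prop) : nat :=
  epsilon (inhabits 0%nat) (fun m => P m /\ forall m', P m' -> (m' <= m)%nat).

(* mult_a(p) = 0 if a is not a root, else 1 + max { mult_a(q) : p ∈ (x-a) q };
   the recursion is on the length (q is shorter than p), implemented with fuel. *)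
Fixpoint mult_fuel (k : nat) (a : TR) (p : list TR) : nat :=
  match k with
  | O => O
  | S k =>
      if excluded_middle_informative (is_root a p)
      then S (natmax (fun m => exists q, pdiv_rel a p q /\ m = mult_fuel k a q))
      else O
  end.

Definition mult (a : TR) (p : list TR) : nat := mult_fuel (length p) a p.

Definition tsign (x : TR) : Z :=
  match x with Inf => 0%Z | Fin true _ => 1%Z | Fin false _ => (-1)%Z end.

(* coefficient i of In^{(r)}(p) in the sign hyperfield S = {0,1,-1}:
   sign(c_i) if |c_i| + i r = C := min_j (|c_j| + j r), else 0 *)
Definition initial_coef (p : list TR) (r : R) (i : nat) : Z :=
  match coef p i with
  | Inf => 0%Z
  | Fin s v =>
      if excluded_middle_informative
           (forall j (s' : bool) w, (j < length p)%nat -> coef p j = Fin s' w ->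
              v + INR i * r <= w + INR j * r)
      then tsign (Fin s v) else 0%Z
  end.

Definition initial_form (p : list TR) (r : R) : list Z :=
  map (initial_coef p r) (seq 0 (length p)).

Fixpoint adj_changes (l : list Z) : nat :=
  match l with
  | x :: ((y :: _) as l') =>
      ((if Z.ltb (x * y) 0 then 1 else 0) + adj_changes l')%nat
  | _ => O
  end.

Definition sign_changes (l : list Z) : nat :=
  adj_changes (filter (fun z => negb (Z.eqb z 0)) l).

(* Scaling the i-th coefficient by a^i moves the root a = (+1, r) to (+1, 0): then
   p ∈ (x - a) q says P_i ∈ -Q_i ⊞ Q_(i-1) for the scaled coefficient lists P and Q, and
   In^(r)(p) is the sign sequence of the terms of P of minimal valuation C.  Reading off
   the terms of valuation C maps hypersums of TR to hypersums of S, so these sign sequences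
   satisfy e ∈ (x - 1) t, and Descartes' rule of signs in S gives Δ(t) + 1 <= Δ(e) for
   every quotient; in the same way ∞ ∈ p(a) exactly when e has a sign change.  Conversely,
   cutting P at its first sign change and solving the division upwards and downwards by the
   summand of least valuation yields a quotient losing exactly one sign change. *)

From Stdlib Require Import Reals List ZArith Lra Lia Classical ClassicalEpsilon.
Import ListNotations.
Open Scope R_scope.

(** * Hyperaddition in TR *)

Lemma hadd_Fin_Fin s v s' w z : hadd (Fin s v) (Fin s' w) z <->
  (v < w /\ z = Fin s v) \/ (w < v /\ z = Fin s' w) \/
  (v = w /\ s' = s /\ z = Fin s v) \/
  (v = w /\ s' = negb s /\ (z = Inf \/ exists b t, v <= t /\ z = Fin b t)).
Proof.
  simpl. destruct (Rlt_dec v w); [|destruct (Rlt_dec w v)].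
  - split; [auto|]. intros [[_ ?]|[[? _]|[[? _]|[? _]]]]; auto; lra.
  - split; [auto|]. intros [[? _]|[[_ ?]|[[? _]|[? _]]]]; auto; lra.
  - assert (w = v) as -> by lra.
    destruct s, s'; cbn [Bool.eqb negb]; intuition (try lra; try discriminate).
Qed.

Lemma hadd_Inf_l y z : hadd Inf y z <-> z = y.
Proof. reflexivity. Qed.

Lemma hadd_Inf_r x z : hadd x Inf z <-> z = x.
Proof. destruct x; reflexivity. Qed.

Ltac hadd_simpl := repeat match goal with
  | H : hadd (Fin _ _) (Fin _ _) _ |- _ => apply (proj1 (hadd_Fin_Fin _ _ _ _ _)) in H
  | H : hadd Inf _ _ |- _ => apply (proj1 (hadd_Inf_l _ _)) in H
  | H : hadd _ Inf _ |- _ => apply (proj1 (hadd_Inf_r _ _)) in H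
  | |- hadd (Fin _ _) (Fin _ _) _ => apply (proj2 (hadd_Fin_Fin _ _ _ _ _))
  | |- hadd Inf _ _ => apply (proj2 (hadd_Inf_l _ _))
  | |- hadd _ Inf _ => apply (proj2 (hadd_Inf_r _ _))
  end.

Definition val_ge (C : R) (x : TR) : Prop :=
  match x with Inf => True | Fin _ v => C <= v end.

Lemma val_ge_topp C x : val_ge C (topp x) <-> val_ge C x.
Proof. destruct x; simpl; tauto. Qed.

Lemma topp_involutive x : topp (topp x) = x.
Proof. destruct x; simpl; rewrite ?Bool.negb_involutive; reflexivity. Qed.

Lemma hadd_comm x y z : hadd x y z -> hadd y x z.
Proof.
  destruct x as [|s v], y as [|s' w]; intro H; hadd_simpl; auto.
  destruct H as [[? ->]|[[? ->]|[[-> [-> ->]]|[-> [-> ?]]]]]; auto.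
  - right; right; left; auto.
  - do 3 right. rewrite Bool.negb_involutive. auto.
Qed.

Lemma hadd_topp x y z : hadd x y z -> hadd (topp x) (topp y) (topp z).
Proof.
  destruct x as [|s v], y as [|s' w]; intro H; hadd_simpl; subst; cbn [topp]; hadd_simpl; auto.
  destruct H as [[? ->]|[[? ->]|[[-> [-> ->]]|[-> [-> [->|[b [t [? ->]]]]]]]]]; cbn [topp].
  - left; auto.
  - right; left; auto.
  - right; right; left; auto.
  - do 3 right. auto.
  - do 3 right. split; [auto|]. split; [auto|]. right. exists (negb b), t. auto.
Qed.

Lemma hadd_Fin_topp b v z : val_ge v z -> hadd (Fin b v) (topp (Fin b v)) z.
Proof.
  intro h. cbn [topp]. hadd_simpl. do 3 right. split; [auto|]. split; [auto|].
  destruct z as [|s t]; [auto|]. right. exists s, t. auto.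
Qed.

Lemma hadd_topp_r_Inf y : hadd y (topp y) Inf.
Proof. destruct y; [reflexivity|apply hadd_Fin_topp; exact I]. Qed.

Lemma hadd_absorb b v y : val_ge v y -> hadd y (Fin b v) (Fin b v).
Proof.
  destruct y as [|s w]; intro h; simpl in h; hadd_simpl; auto.
  destruct (Rlt_dec v w); [right; left; auto|]. assert (w = v) as -> by lra.
  destruct (Bool.bool_dec b s) as [->|?]; [right; right; left; auto|].
  do 3 right. split; [auto|]. split; [destruct b, s; simpl; congruence|].
  right. exists b, v. split; [lra|auto].
Qed.

Lemma hadd_rev x y z : hadd x y z -> hadd z (topp y) x.
Proof.
  destruct x as [|s v], y as [|s' w]; intro H; hadd_simpl; subst;
    auto using hadd_topp_r_Inf; try (cbn [topp]; hadd_simpl; reflexivity).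
  destruct H as [[? ->]|[[? ->]|[[-> [-> ->]]|[-> [-> [->|[b [t [? ->]]]]]]]]].
  - cbn [topp]. hadd_simpl. left; auto.
  - apply hadd_Fin_topp. simpl. lra.
  - apply hadd_Fin_topp. simpl. lra.
  - cbn [topp]. rewrite Bool.negb_involutive. hadd_simpl. reflexivity.
  - cbn [topp]. rewrite Bool.negb_involutive. apply hadd_absorb. simpl. lra.
Qed.

Lemma hadd_val_ge C x y z : val_ge C x -> val_ge C y -> hadd x y z -> val_ge C z.
Proof.
  destruct x as [|s v], y as [|s' w]; intros hx hy H; hadd_simpl; subst; auto.
  destruct H as [[? ->]|[[? ->]|[[? [? ->]]|[-> [? [->|[b [t [? ->]]]]]]]]]; simpl in *; auto; lra.
Qed.

Lemma hadd_val_ge_l C x y z : val_ge C y -> val_ge C z -> hadd x y z -> val_ge C x.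
Proof.
  destruct x as [|s v], y as [|s' w]; intros hy hz H; hadd_simpl; subst; simpl in *; auto.
  destruct H as [[? ->]|[[? ->]|[[? [? ->]]|[-> ?]]]]; simpl in *; lra.
Qed.

Definition hmin (x y : TR) : TR :=
  match x, y with
  | Inf, _ => y
  | _, Inf => x
  | Fin _ v, Fin _ w => if Rlt_dec w v then y else x
  end.

Lemma hadd_hmin x y : hadd x y (hmin x y).
Proof.
  destruct x as [|s v], y as [|s' w]; try reflexivity. simpl hmin.
  destruct (Rlt_dec w v).
  - apply hadd_absorb. simpl. lra.
  - apply hadd_comm, hadd_absorb. simpl. lra.
Qed.

Lemma hmin_Inf_r x : hmin x Inf = x.
Proof. destruct x; reflexivity. Qed.

Lemma hmin_val_ge C x y : val_ge C x -> val_ge C y -> val_ge C (hmin x y).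
Proof. destruct x, y; simpl; auto. destruct Rlt_dec; auto. Qed.

Lemma exists_hadd_l C y z : val_ge C y -> val_ge C z -> exists b, val_ge C b /\ hadd b y z.
Proof.
  intros hy hz. destruct z as [|s t].
  - exists (topp y). split; [apply val_ge_topp; exact hy|]. apply hadd_comm, hadd_topp_r_Inf.
  - destruct y as [|s' w]; [exists (Fin s t); split; [exact hz|reflexivity]|].
    destruct (Rlt_dec t w).
    + exists (Fin s t). split; [exact hz|]. apply hadd_comm, hadd_absorb. simpl. lra.
    + exists (topp (Fin s' w)). split; [exact hy|]. apply hadd_comm, hadd_Fin_topp. simpl. lra.
Qed.

Definition tshift (c : R) (x : TR) : TR :=
  match x with Inf => Inf | Fin s v => Fin s (v + c) end.

Lemma tmul_Fin_true_l c x : tmul (Fin true c) x = tshift c x.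
Proof. destruct x as [|s v]; simpl; auto. f_equal; [destruct s; auto|ring]. Qed.

Lemma tmul_Fin_true_r c x : tmul x (Fin true c) = tshift c x.
Proof. destruct x as [|s v]; simpl; auto. destruct s; reflexivity. Qed.

Lemma tshift_tshift c d x : tshift c (tshift d x) = tshift (d + c) x.
Proof. destruct x; simpl; auto. f_equal; ring. Qed.

Lemma tshift_0 x : tshift 0 x = x.
Proof. destruct x; simpl; auto. f_equal; ring. Qed.

Lemma tshift_topp c x : tshift c (topp x) = topp (tshift c x).
Proof. destruct x; reflexivity. Qed.

Lemma val_ge_tshift C c x : val_ge C (tshift c x) <-> val_ge (C - c) x.
Proof. destruct x; simpl; [tauto|lra]. Qed.

Lemma hadd_tshift c x y z : hadd x y z -> hadd (tshift c x) (tshift c y) (tshift c z).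
Proof.
  destruct x as [|s v], y as [|s' w]; simpl tshift; intro H; hadd_simpl; subst; auto.
  destruct H as [[? ->]|[[? ->]|[[-> [-> ->]]|[-> [-> [->|[b [t [? ->]]]]]]]]]; simpl.
  - left; split; [lra|auto].
  - right; left; split; [lra|auto].
  - right; right; left; auto.
  - do 3 right; auto.
  - do 3 right. split; [auto|]. split; [auto|]. right. exists b, (t + c). split; [lra|auto].
Qed.

Lemma hadd_tshift_iff c x y z : hadd (tshift c x) (tshift c y) (tshift c z) <-> hadd x y z.
Proof.
  split; [|apply hadd_tshift]. intro H. apply (hadd_tshift (- c)) in H.
  rewrite !tshift_tshift, Rplus_opp_r, !tshift_0 in H. exact H.
Qed.

(** * Sign sequences *)

Definition is_sign (z : Z) : bool := (z =? -1)%Z || (z =? 0)%Z || (z =? 1)%Z.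

Lemma is_sign_cases z : is_sign z = true -> (z = -1 \/ z = 0 \/ z = 1)%Z.
Proof. unfold is_sign. rewrite !Bool.orb_true_iff, !Z.eqb_eq. tauto. Qed.

Ltac sign_cases := repeat match goal with
  | H : is_sign ?z = true |- _ => destruct (is_sign_cases z H) as [-> | [-> | ->]]; clear H
  end.

Section SignSequences.
Local Open Scope Z_scope.

Definition next_sign (m x : Z) : Z := if x =? 0 then m else x.

Definition flip (m x : Z) : nat := if m * x <? 0 then 1%nat else 0%nat.

(* [changes_from l m] counts the sign changes of [m :: l], ignoring zeros;
   [last_sign l m] is the last nonzero entry of [m :: l] (or [0]). *)
Fixpoint changes_from (l : list Z) (m : Z) : nat :=
  match l with [] => 0%nat | x :: l' => (flip m x + changes_from l' (next_sign m x))%nat end.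

Fixpoint last_sign (l : list Z) (m : Z) : Z :=
  match l with [] => m | x :: l' => last_sign l' (next_sign m x) end.

Lemma next_sign_0_l x : next_sign 0 x = x.
Proof. unfold next_sign. destruct (Z.eqb_spec x 0); auto. Qed.

Lemma is_sign_next_sign m x : is_sign m = true -> is_sign x = true -> is_sign (next_sign m x) = true.
Proof. unfold next_sign. destruct (x =? 0); auto. Qed.

Lemma adj_changes_filter_nonzero x l : x <> 0 ->
  adj_changes (x :: filter (fun z => negb (z =? 0)) l) = changes_from l x.
Proof.
  revert x; induction l as [|y l IH]; intros x hx; [reflexivity|].
  cbn [filter changes_from]. unfold next_sign, flip.
  destruct (Z.eqb_spec y 0) as [->|hy]; cbn [negb].
  - rewrite Z.mul_0_r. apply IH; auto.
  - rewrite <- IH by auto. reflexivity.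
Qed.

Lemma sign_changes_changes_from l : sign_changes l = changes_from l 0.
Proof.
  unfold sign_changes. induction l as [|y l IH]; [reflexivity|].
  cbn [filter changes_from]. rewrite next_sign_0_l. unfold flip.
  destruct (Z.eqb_spec y 0) as [->|hy]; cbn [negb].
  - exact IH.
  - rewrite adj_changes_filter_nonzero by auto. reflexivity.
Qed.

Lemma changes_from_app l1 l2 m :
  changes_from (l1 ++ l2) m = (changes_from l1 m + changes_from l2 (last_sign l1 m))%nat.
Proof. revert m; induction l1; intro m; simpl; auto. rewrite IHl1. lia. Qed.

Lemma changes_from_dup_hd l m : changes_from (hd 0 l :: l) m = changes_from l m.
Proof.
  destruct l as [|x l]; cbn [hd changes_from]; unfold flip, next_sign.
  - rewrite Z.mul_0_r. reflexivity.
  - destruct (Z.eqb_spec x 0) as [->|hx].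
    + rewrite Z.mul_0_r. reflexivity.
    + destruct (Z.ltb_spec (x * x) 0); [nia|]. destruct (m * x <? 0); reflexivity.
Qed.

Lemma first_sign_change l m : (1 <= changes_from l m)%nat ->
  exists l1 x l2, l = l1 ++ x :: l2 /\ changes_from l1 m = 0%nat /\ last_sign l1 m * x < 0.
Proof.
  revert m; induction l as [|y l IH]; intros m H; simpl in H; [lia|].
  unfold flip in H. destruct (Z.ltb_spec (m * y) 0) as [h|h].
  - exists [], y, l. auto.
  - destruct (IH (next_sign m y)) as [l1 [x [l2 [-> [c k]]]]]; [lia|].
    exists (y :: l1), x, l2. simpl. unfold flip. destruct (Z.ltb_spec (m * y) 0); [lia|]. auto.
Qed.

Lemma last_sign_neq0_init l m : m <> 0 -> last_sign l m <> 0.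
Proof.
  revert m; induction l as [|x l IH]; intros m hm; simpl; [exact hm|].
  apply IH. unfold next_sign. destruct (Z.eqb_spec x 0); auto.
Qed.

Lemma last_sign_neq0 l m : (exists y, In y l /\ y <> 0) -> last_sign l m <> 0.
Proof.
  revert m; induction l as [|x l IH]; intros m [y [hy hy0]]; [destruct hy|]. simpl.
  destruct hy as [<-|hy].
  - apply last_sign_neq0_init. unfold next_sign. destruct (Z.eqb_spec x 0); tauto.
  - apply IH. eauto.
Qed.

Lemma last_sign_neq0_inv l m : last_sign l m <> 0 -> m <> 0 \/ exists y, In y l /\ y <> 0.
Proof.
  revert m; induction l as [|x l IH]; intros m H; simpl in H; [auto|].
  destruct (IH _ H) as [h|[y [hy hy0]]]; [|eauto with datatypes].
  unfold next_sign in h. destruct (Z.eqb_spec x 0); [auto|eauto with datatypes].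
Qed.

Lemma is_sign_last_sign l m : is_sign m = true -> Forall (fun z => is_sign z = true) l ->
  is_sign (last_sign l m) = true.
Proof.
  intros hm hl. revert m hm. induction hl as [|x l hx hl IH]; intros m hm; simpl; auto.
  apply IH, is_sign_next_sign; auto.
Qed.

Lemma sign_mul_neg a b : is_sign a = true -> is_sign b = true -> a * b < 0 -> a <> 0 /\ b = - a.
Proof. intros. sign_cases; lia. Qed.

End SignSequences.

(** * Descartes' rule of signs in the sign hyperfield *)

Section SignHyperfield.
Local Open Scope Z_scope.

Definition sadd (x y z : Z) : bool :=
  if x =? 0 then z =? y else if y =? 0 then z =? x else if x =? y then z =? x else true.

(* [sign_xm1_rel tau e t] says e_0 ∈ -t_0 ⊞ tau, e_i ∈ -t_i ⊞ t_(i-1) and e_n = t_(n-1):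
   for [tau = 0] this is [e ∈ (x - 1) t] in the sign hyperfield. *)
Fixpoint sign_xm1_rel (tau : Z) (e t : list Z) : Prop :=
  match e, t with
  | [], _ => False
  | x :: e', [] => e' = [] /\ x = tau
  | x :: e', y :: t' => sadd (- y) tau x = true /\ sign_xm1_rel y e' t'
  end.

(* Invariant of a left-to-right scan of [e ∈ (x - 1) t]: [tau] is the previous entry of [t],
   [lt] and [le] are the last nonzero signs of [t] and [e] read so far. *)
Definition descartes_inv (tau lt le : Z) : bool :=
  if tau =? 0 then le =? lt else andb (tau =? lt) (negb (le =? 0)).

Definition descartes_bonus (lt le : Z) : nat :=
  if andb (le =? lt) (negb (lt =? 0)) then 1%nat else 0%nat.

Definition nonzero (z : Z) : nat := if z =? 0 then 0%nat else 1%nat.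

Lemma descartes_inv_step x y tau lt le :
  is_sign x = true -> is_sign y = true -> is_sign tau = true -> is_sign lt = true ->
  is_sign le = true -> sadd (- y) tau x = true -> descartes_inv tau lt le = true ->
  descartes_inv y (next_sign lt y) (next_sign le x) = true /\
  (flip lt y + descartes_bonus (next_sign lt y) (next_sign le x)
     <= flip le x + descartes_bonus lt le)%nat.
Proof. intros. sign_cases; vm_compute in *; try discriminate; split; auto; lia. Qed.

Lemma descartes_inv_last tau lt le :
  is_sign tau = true -> is_sign lt = true -> is_sign le = true ->
  descartes_inv tau lt le = true -> (nonzero lt <= flip le tau + descartes_bonus lt le)%nat.
Proof. intros. sign_cases; vm_compute in *; try discriminate; lia. Qed.

Lemma sign_xm1_rel_changes_from e : forall t tau lt le,
  sign_xm1_rel tau e t -> Forall (fun z => is_sign z = true) e ->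
  Forall (fun z => is_sign z = true) t ->
  is_sign tau = true -> is_sign lt = true -> is_sign le = true ->
  descartes_inv tau lt le = true ->
  (changes_from t lt + nonzero (last_sign t lt) <= changes_from e le + descartes_bonus lt le)%nat.
Proof.
  induction e as [|x e IH]; intros t tau lt le H fe ft htau hlt hle hinv; [destruct H|].
  inversion fe as [|? ? hx fe']; subst.
  destruct t as [|y t]; simpl in H |- *.
  - destruct H as [-> ->]. simpl. pose proof (descartes_inv_last tau lt le htau hlt hle hinv). lia.
  - destruct H as [hxy H]. inversion ft as [|? ? hy ft']; subst.
    destruct (descartes_inv_step x y tau lt le) as [hinv' hle']; auto.
    specialize (IH t y _ _ H fe' ft' hy (is_sign_next_sign _ _ hlt hy)
      (is_sign_next_sign _ _ hle hx) hinv'). lia.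
Qed.

Lemma sign_xm1_rel_changes e t : sign_xm1_rel 0 e t ->
  Forall (fun z => is_sign z = true) e -> Forall (fun z => is_sign z = true) t ->
  (exists y, In y t /\ y <> 0) -> (changes_from t 0 + 1 <= changes_from e 0)%nat.
Proof.
  intros H fe ft ht.
  pose proof (sign_xm1_rel_changes_from e t 0 0 0 H fe ft eq_refl eq_refl eq_refl eq_refl) as G.
  unfold nonzero in G. destruct (Z.eqb_spec (last_sign t 0) 0) as [h|_].
  - exfalso. exact (last_sign_neq0 t 0 ht h).
  - rewrite Nat.add_0_r in G. exact G.
Qed.

Lemma sign_xm1_rel_zero e t : sign_xm1_rel 0 e t -> (forall y, In y t -> y = 0) ->
  forall x, In x e -> x = 0.
Proof.
  revert t; induction e as [|x e IH]; intros t H ht z hz; [destruct H|].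
  destruct t as [|y t]; simpl in H.
  - destruct H as [-> ->]. destruct hz as [->|[]]; auto.
  - destruct H as [hx H]. assert (y = 0) as -> by (apply ht; left; auto).
    destruct hz as [<-|hz].
    + apply Z.eqb_eq. exact hx.
    + apply (IH t); auto with datatypes.
Qed.

Lemma sadd_0_l a : sadd 0 a a = true.
Proof. apply Z.eqb_refl. Qed.

Lemma sadd_0_r a : sadd a 0 a = true.
Proof. unfold sadd. destruct (Z.eqb_spec a 0) as [->|]; rewrite ?Z.eqb_refl; reflexivity. Qed.

Lemma sadd_next_sign m t z : is_sign m = true -> is_sign t = true -> is_sign z = true ->
  sadd m t z = true -> flip m t = 0%nat -> z = next_sign m t.
Proof. intros. sign_cases; vm_compute in *; congruence. Qed.

End SignHyperfield.

(** * Initial signs of hypersums *)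

(* [sign_at C x] is the coefficient of [x] in the initial form at valuation [C]. *)
Definition sign_at (C : R) (x : TR) : Z :=
  match x with
  | Inf => 0
  | Fin b v => if Req_EM_T v C then (if b then 1 else -1) else 0
  end.

Lemma is_sign_sign_at C x : is_sign (sign_at C x) = true.
Proof. destruct x as [|[] v]; simpl; auto; destruct Req_EM_T; auto. Qed.

Lemma Forall_is_sign_sign_at C l : Forall (fun z => is_sign z = true) (map (sign_at C) l).
Proof. apply Forall_map, Forall_forall. intros. apply is_sign_sign_at. Qed.

Lemma sign_at_topp C x : sign_at C (topp x) = (- sign_at C x)%Z.
Proof. destruct x as [|[] v]; simpl; auto; destruct Req_EM_T; auto. Qed.

Lemma sign_at_Fin_neq0 b C : sign_at C (Fin b C) <> 0%Z.
Proof. simpl. destruct Req_EM_T; [|congruence]. destruct b; discriminate. Qed.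

Lemma sign_at_neq0 C x : sign_at C x <> 0%Z -> exists b, x = Fin b C.
Proof. destruct x as [|b v]; simpl; [congruence|]. destruct Req_EM_T; [subst; eauto|congruence]. Qed.

Lemma sign_at_inj C x y : sign_at C x = sign_at C y -> sign_at C x <> 0%Z -> x = y.
Proof.
  intros e n. destruct (sign_at_neq0 C x n) as [b ->].
  rewrite e in n. destruct (sign_at_neq0 C y n) as [b' ->].
  simpl in e. destruct Req_EM_T; [|congruence]. destruct b, b'; simpl in e; congruence.
Qed.

Lemma sign_at_tshift C c x : sign_at C (tshift c x) = sign_at (C - c) x.
Proof. destruct x as [|b v]; simpl; auto. do 2 destruct Req_EM_T; auto; lra. Qed.

Lemma sign_at_gt C b v : C < v -> sign_at C (Fin b v) = 0%Z.
Proof. intro h. simpl. destruct Req_EM_T; [lra|auto]. Qed.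

Lemma sadd_sign_at C x y z : val_ge C x -> val_ge C y -> hadd x y z ->
  sadd (sign_at C x) (sign_at C y) (sign_at C z) = true.
Proof.
  destruct x as [|s v], y as [|s' w]; intros hx hy H; hadd_simpl; subst; auto using sadd_0_l, sadd_0_r.
  simpl in hx, hy.
  destruct H as [[? ->]|[[? ->]|[[-> [-> ->]]|[-> [-> hz]]]]].
  - rewrite (sign_at_gt C s' w) by lra. apply sadd_0_r.
  - rewrite (sign_at_gt C s v) by lra. apply sadd_0_l.
  - unfold sadd. destruct (Z.eqb_spec (sign_at C (Fin s w)) 0) as [->|]; [reflexivity|].
    rewrite Z.eqb_refl. reflexivity.
  - destruct (Req_EM_T w C) as [->|ne].
    + destruct s; simpl; destruct Req_EM_T; try congruence; reflexivity.
    + assert (C < w) by (destruct hx; congruence).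
      rewrite !(sign_at_gt C) by lra.
      destruct hz as [->|[b [t [? ->]]]]; [reflexivity|]. rewrite (sign_at_gt C) by lra. reflexivity.
Qed.

Lemma sign_at_hmin C x y : val_ge C x -> val_ge C y ->
  sign_at C (hmin x y) = if (sign_at C x =? 0)%Z then sign_at C y else sign_at C x.
Proof.
  destruct x as [|s v], y as [|s' w]; simpl val_ge; intros hx hy; simpl hmin.
  - reflexivity.
  - reflexivity.
  - destruct (Z.eqb_spec (sign_at C (Fin s v)) 0); auto.
  - destruct (Rlt_dec w v).
    + rewrite (sign_at_gt C s v) by lra. reflexivity.
    + destruct (Z.eqb_spec (sign_at C (Fin s v)) 0) as [e|e]; auto.
      rewrite e. simpl in e |- *. destruct (Req_EM_T v C); [destruct s; discriminate|].
      destruct Req_EM_T; auto; lra.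
Qed.

Section PartialSums.
Variable C : R.

Definition hsum_step (S : TR -> Prop) (y : TR) : TR -> Prop :=
  fun z => exists b, S b /\ hadd b y z.

(* [n] counts the sign changes at [C] read so far and [m] is the last nonzero sign:
   before the first change all partial sums have initial sign [m], after it every
   element of valuation [>= C] is a partial sum. *)
Definition partial_sums_inv (n : nat) (m : Z) (S : TR -> Prop) : Prop :=
  (exists z, S z) /\
  (n = 0%nat -> forall z, S z -> val_ge C z /\ sign_at C z = m) /\
  ((1 <= n)%nat -> forall z, val_ge C z -> S z).

Lemma partial_sums_inv_step n m S y : is_sign m = true -> val_ge C y ->
  partial_sums_inv n m S ->
  partial_sums_inv (n + flip m (sign_at C y)) (next_sign m (sign_at C y)) (hsum_step S y).
Proof.
  intros hm hy [[z0 hz0] [hsgn hfull]].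
  split; [exists (hmin z0 y), z0; split; [auto|apply hadd_hmin]|].
  destruct n as [|n].
  - destruct (hsgn eq_refl z0 hz0) as [hz0v hz0s].
    unfold flip at 1 2. destruct (Z.ltb_spec (m * sign_at C y) 0) as [hneg|hpos].
    + split; [lia|]. intros _ z hz. exists z0. split; [exact hz0|].
      destruct (sign_mul_neg m (sign_at C y)) as [hm0 hym]; auto using is_sign_sign_at.
      rewrite <- hz0s in hm0, hym.
      assert (y = topp z0) as -> by (apply (sign_at_inj C); rewrite ?sign_at_topp; lia).
      destruct (sign_at_neq0 C z0 hm0) as [b ->]. apply hadd_Fin_topp, hz.
    + split; [|lia]. intros _ z [b [hb hz]]. destruct (hsgn eq_refl b hb) as [hbv hbs].
      split; [apply (hadd_val_ge C b y z); auto|].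
      apply sadd_next_sign; auto using is_sign_sign_at.
      * rewrite <- hbs. apply sadd_sign_at; auto.
      * unfold flip. destruct (Z.ltb_spec (m * sign_at C y) 0); [lia|auto].
  - split; [lia|]. intros _ z hz.
    destruct (exists_hadd_l C y z hy hz) as [b [hb hbz]].
    exists b. split; [apply hfull; [lia|auto]|auto].
Qed.

Lemma partial_sums_inv_fold l : forall n m S, (forall x, In x l -> val_ge C x) ->
  is_sign m = true -> partial_sums_inv n m S ->
  partial_sums_inv (n + changes_from (map (sign_at C) l) m) (last_sign (map (sign_at C) l) m)
    (fold_left hsum_step l S).
Proof.
  induction l as [|y l IH]; intros n m S hl hm hS; simpl; [rewrite Nat.add_0_r; auto|].
  rewrite Nat.add_assoc. apply IH; auto with datatypes.
  - apply is_sign_next_sign; auto using is_sign_sign_at.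
  - apply partial_sums_inv_step; auto with datatypes.
Qed.

Lemma hsum_Inf_iff P : P <> [] -> (forall x, In x P -> val_ge C x) ->
  (exists x, In x P /\ sign_at C x <> 0%Z) ->
  (hsum P Inf <-> (1 <= changes_from (map (sign_at C) P) 0)%nat).
Proof.
  intros hne hge hnz. destruct P as [|a l]; [congruence|].
  change (hsum (a :: l)) with (fold_left hsum_step l (fun z => z = a)).
  assert (partial_sums_inv 0 (sign_at C a) (fun z => z = a)) as H0.
  { split; [eauto|]. split; [intros _ z ->; auto with datatypes|lia]. }
  destruct (partial_sums_inv_fold l 0 (sign_at C a) _ (fun x hx => hge x (or_intror hx))
    (is_sign_sign_at C a) H0) as [_ [hsgn hfull]].
  assert (last_sign (map (sign_at C) (a :: l)) 0 <> 0%Z) as hlast.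
  { apply last_sign_neq0. destruct hnz as [x [hx hx0]]. exists (sign_at C x). split; [|auto].
    apply in_map. exact hx. }
  cbn [map changes_from last_sign] in *. rewrite next_sign_0_l in hlast |- *.
  unfold flip at 1. rewrite Z.mul_0_l. simpl Nat.add.
  split.
  - intro H. destruct (changes_from (map (sign_at C) l) (sign_at C a)) as [|n]; [|lia].
    exfalso. apply hlast. symmetry. apply (hsgn eq_refl Inf H).
  - intro h. apply hfull; simpl; auto.
Qed.

End PartialSums.

(** * Moving the root to (+1, 0) *)

(* With [a = (+1, r)], [scaled_coefs r 0 p] lists the terms [c_i a^i] of [p(a)] and
   [scaled_coefs r r q] the terms [d_i a^(i+1)]: this moves the root [a] to [(+1, 0)]. *)
Definition scaled_coefs (r k : R) (p : list TR) : list TR :=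
  map (fun i => tshift (INR i * r + k) (coef p i)) (seq 0 (length p)).

Lemma length_scaled_coefs r k p : length (scaled_coefs r k p) = length p.
Proof. unfold scaled_coefs. rewrite length_map, length_seq. reflexivity. Qed.

Lemma nth_map_seq {A : Type} (f : nat -> A) (d : A) n i :
  (i < n)%nat -> nth i (map f (seq 0 n)) d = f i.
Proof.
  intro h. rewrite nth_indep with (d' := f 0%nat) by (rewrite length_map, length_seq; auto).
  rewrite map_nth, seq_nth by auto. reflexivity.
Qed.

Lemma nth_scaled_coefs r k p i : nth i (scaled_coefs r k p) Inf = tshift (INR i * r + k) (coef p i).
Proof.
  destruct (Nat.lt_ge_cases i (length p)) as [h|h].
  - exact (nth_map_seq _ Inf _ _ h).
  - unfold coef. rewrite !nth_overflow; [reflexivity|auto|].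
    rewrite length_scaled_coefs. exact h.
Qed.

Lemma nth_Inf_cons_scaled_coefs r q i :
  nth i (Inf :: scaled_coefs r r q) Inf = tshift (INR i * r) (nth i (Inf :: q) Inf).
Proof.
  destruct i as [|j]; [reflexivity|]. cbn [nth]. rewrite nth_scaled_coefs.
  f_equal. rewrite S_INR. ring.
Qed.

Lemma In_scaled_coefs r k p x : In x (scaled_coefs r k p) <->
  exists i, (i < length p)%nat /\ x = tshift (INR i * r + k) (coef p i).
Proof.
  unfold scaled_coefs. rewrite in_map_iff. split.
  - intros [i [<- hi]]. apply in_seq in hi. exists i. split; [lia|auto].
  - intros [i [hi ->]]. exists i. split; [auto|]. apply in_seq. lia.
Qed.

Definition unscale (r k : R) (Q : list TR) : list TR :=
  map (fun i => tshift (- (INR i * r + k)) (nth i Q Inf)) (seq 0 (length Q)).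

Lemma length_unscale r k Q : length (unscale r k Q) = length Q.
Proof. unfold unscale. rewrite length_map, length_seq. reflexivity. Qed.

Lemma scaled_coefs_unscale r k Q : scaled_coefs r k (unscale r k Q) = Q.
Proof.
  apply nth_ext with (d := Inf) (d' := Inf); rewrite length_scaled_coefs, length_unscale; [auto|].
  intros i hi. rewrite nth_scaled_coefs. unfold coef, unscale. rewrite nth_map_seq by auto.
  rewrite tshift_tshift, Rplus_opp_l, tshift_0. reflexivity.
Qed.

Lemma tpow_Fin_true r i : tpow (Fin true r) i = Fin true (INR i * r).
Proof.
  induction i as [|i IH]; cbn [tpow].
  - unfold tone. f_equal. simpl. ring.
  - rewrite IH, tmul_Fin_true_r. cbn [tshift]. f_equal. rewrite S_INR. ring.
Qed.

Lemma peval_scaled_coefs p r : peval p (Fin true r) = hsum (scaled_coefs r 0 p).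
Proof.
  unfold peval, scaled_coefs. f_equal. apply map_ext. intro i.
  rewrite tpow_Fin_true, tmul_Fin_true_r, Rplus_0_r. reflexivity.
Qed.

Lemma initial_form_scaled_coefs r k p C :
  (forall x, In x (scaled_coefs r k p) -> val_ge C x) ->
  (exists x, In x (scaled_coefs r k p) /\ sign_at C x <> 0%Z) ->
  initial_form p r = map (sign_at C) (scaled_coefs r k p).
Proof.
  intros hge [x0 [hx0 hx0s]]. apply In_scaled_coefs in hx0. destruct hx0 as [j0 [hj0 ->]].
  rewrite sign_at_tshift in hx0s. destruct (sign_at_neq0 _ _ hx0s) as [b0 e0].
  assert (G : forall j, (j < length p)%nat -> val_ge (C - (INR j * r + k)) (coef p j)).
  { intros j hj. apply val_ge_tshift, hge, In_scaled_coefs. eauto. }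
  unfold initial_form, scaled_coefs. rewrite map_map. apply map_ext_in. intros i hi.
  apply in_seq in hi. pose proof (G i ltac:(lia)) as gi.
  unfold initial_coef. destruct (coef p i) as [|s v]; [reflexivity|].
  simpl in gi. cbn [tshift sign_at tsign].
  destruct excluded_middle_informative as [hmin|hmin]; destruct Req_EM_T as [he|he].
  - reflexivity.
  - exfalso. apply he. specialize (hmin j0 b0 _ hj0 e0). lra.
  - exfalso. apply hmin. intros j s' w hj hcj. pose proof (G j hj) as gj.
    rewrite hcj in gj. simpl in gj. lra.
  - reflexivity.
Qed.

Lemma exists_min_val (L : list TR) : (exists x, In x L /\ x <> Inf) ->
  exists C, (forall x, In x L -> val_ge C x) /\ (exists x, In x L /\ sign_at C x <> 0%Z).
Proof.
  induction L as [|a L IH]; intros [x [hx hx0]]; [destruct hx|].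
  destruct (classic (exists x, In x L /\ x <> Inf)) as [h|h].
  - destruct (IH h) as [C [hC [y [hy hy0]]]].
    destruct a as [|b v].
    + exists C. split; [intros z [<-|hz]; simpl; auto|]. exists y. auto with datatypes.
    + destruct (Rlt_dec v C).
      * exists v. split.
        -- intros z [<-|hz]; simpl; [lra|]. pose proof (hC z hz). destruct z; simpl in *; lra.
        -- exists (Fin b v). split; [left; auto|apply sign_at_Fin_neq0].
      * exists C. split.
        -- intros z [<-|hz]; simpl; [lra|auto].
        -- exists y. auto with datatypes.
  - destruct hx as [<-|hx]; [|exfalso; eauto].
    destruct a as [|b v]; [congruence|].
    exists v. split.
    + intros z [<-|hz]; simpl; [lra|]. destruct z as [|b' w]; simpl; [auto|].
      exfalso. apply h. exists (Fin b' w). split; [auto|discriminate].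
    + exists (Fin b v). split; [left; auto|apply sign_at_Fin_neq0].
Qed.

(* [xm1_rel prev P Q] says P_i ∈ -Q_i ⊞ Q_(i-1) for [i < length Q], with Q_(-1) = prev,
   and P_n = Q_(n-1): for [prev = Inf] this is [P ∈ (x - 1) Q]. *)
Fixpoint xm1_rel (prev : TR) (P Q : list TR) : Prop :=
  match P, Q with
  | [], _ => False
  | x :: P', [] => P' = [] /\ x = prev
  | x :: P', y :: Q' => hadd (topp y) prev x /\ xm1_rel y P' Q'
  end.

Lemma xm1_rel_nth P : forall prev Q, xm1_rel prev P Q <->
  length P = S (length Q) /\ forall i, (i < length P)%nat ->
    hadd (topp (nth i Q Inf)) (nth i (prev :: Q) Inf) (nth i P Inf).
Proof.
  induction P as [|x P IH]; intros prev Q; [simpl; split; [tauto|intros [h _]; discriminate]|].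
  destruct Q as [|y Q]; cbn [xm1_rel length].
  - split.
    + intros [-> ->]. split; [auto|]. intros [|i] hi; [|simpl in hi; lia]. simpl. hadd_simpl. auto.
    + intros [h1 h2]. destruct P; [|discriminate]. split; [auto|].
      specialize (h2 0%nat ltac:(lia)). simpl in h2. hadd_simpl. auto.
  - rewrite IH. split.
    + intros [h1 [h2 h3]]. split; [lia|]. intros [|i] hi; [exact h1|]. apply h3. lia.
    + intros [h1 h2]. split; [apply (h2 0%nat); lia|]. split; [lia|].
      intros i hi. apply (h2 (S i)). lia.
Qed.

Lemma tmul_Inf_r x : tmul x Inf = Inf.
Proof. destruct x; reflexivity. Qed.

Lemma pdiv_rel_nth a p q : pdiv_rel a p q <->
  length p = S (length q) /\ (1 <= length q)%nat /\
  forall i, (i < length p)%nat -> hadd (topp (tmul a (coef q i))) (nth i (Inf :: q) Inf) (coef p i).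
Proof.
  assert (coef_end : coef q (length q) = Inf) by (apply nth_overflow; auto).
  unfold pdiv_rel. split.
  - intros [hl [hn [h0 [hm hN]]]]. split; [auto|]. split; [auto|].
    intros [|j] hi; cbn [nth]; [hadd_simpl; auto|].
    destruct (Nat.lt_ge_cases (S j) (length q)) as [hj|hj].
    + specialize (hm (S j) ltac:(lia)). replace (S j - 1)%nat with j in hm by lia. exact hm.
    + assert (S j = length q) as ej by lia. rewrite <- ej in coef_end, hN.
      rewrite coef_end, tmul_Inf_r. cbn [topp]. hadd_simpl. rewrite hN. unfold coef. f_equal. lia.
  - intros [hl [hn H]]. split; [auto|]. split; [auto|]. split; [|split].
    + specialize (H 0%nat ltac:(lia)). cbn [nth] in H. hadd_simpl. auto.
    + intros i [hi1 hi2]. destruct i as [|j]; [lia|].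
      specialize (H (S j) ltac:(lia)). replace (S j - 1)%nat with j by lia. exact H.
    + specialize (H (length q) ltac:(lia)). rewrite coef_end, tmul_Inf_r in H.
      destruct (length q) as [|j]; [lia|]. cbn [nth topp] in H. hadd_simpl.
      replace (S j - 1)%nat with j by lia. auto.
Qed.

Lemma pdiv_rel_iff_xm1_rel r p q : pdiv_rel (Fin true r) p q <->
  (1 <= length q)%nat /\ xm1_rel Inf (scaled_coefs r 0 p) (scaled_coefs r r q).
Proof.
  rewrite pdiv_rel_nth, xm1_rel_nth, !length_scaled_coefs.
  assert (index : forall i, hadd (topp (tmul (Fin true r) (coef q i))) (nth i (Inf :: q) Inf) (coef p i) <->
    hadd (topp (nth i (scaled_coefs r r q) Inf)) (nth i (Inf :: scaled_coefs r r q) Inf)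
      (nth i (scaled_coefs r 0 p) Inf)).
  { intro i. rewrite nth_Inf_cons_scaled_coefs, !nth_scaled_coefs, tmul_Fin_true_l,
      Rplus_0_r, Rplus_comm, <- tshift_tshift, <- (tshift_topp (INR i * r)), hadd_tshift_iff.
    reflexivity. }
  split.
  - intros [hl [hn H]]. split; [auto|]. split; [auto|]. intros i hi. apply index, H, hi.
  - intros [hn [hl H]]. split; [auto|]. split; [auto|]. intros i hi. apply index, H, hi.
Qed.

(** * Quotients by x - 1 *)

(* Solving [P_i ∈ -Q_i ⊞ Q_(i-1)] for [Q_i] upwards from [Q_(-1) = prev], or for [Q_(i-1)]
   downwards from [Q_n = Inf] (so [quot_down P] starts with [Q_(-1)]), each time by the
   summand of least valuation. *)
Fixpoint quot_up (prev : TR) (P : list TR) : list TR :=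
  match P with [] => [] | x :: P' => hmin (topp x) prev :: quot_up (hmin (topp x) prev) P' end.

Fixpoint quot_up_last (prev : TR) (P : list TR) : TR :=
  match P with [] => prev | x :: P' => quot_up_last (hmin (topp x) prev) P' end.

Fixpoint quot_down (P : list TR) : list TR :=
  match P with [] => [] | x :: P' => hmin x (hd Inf (quot_down P')) :: quot_down P' end.

Lemma xm1_rel_quot_up P1 : forall prev P2 Q2, xm1_rel (quot_up_last prev P1) P2 Q2 ->
  xm1_rel prev (P1 ++ P2) (quot_up prev P1 ++ Q2).
Proof.
  induction P1 as [|x P1 IH]; intros prev P2 Q2 H; simpl; [exact H|].
  split; [|apply IH, H].
  pose proof (hadd_topp _ _ _ (hadd_rev _ _ _ (hadd_hmin (topp x) prev))) as h.
  rewrite !topp_involutive in h. exact h.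
Qed.

Lemma xm1_rel_quot_down P : P <> [] -> xm1_rel (hd Inf (quot_down P)) P (tl (quot_down P)).
Proof.
  induction P as [|x P IH]; intro hP; [congruence|].
  destruct P as [|y P]; [simpl; rewrite hmin_Inf_r; auto|].
  specialize (IH ltac:(congruence)).
  cbn [quot_down hd tl] in IH |- *. cbn [xm1_rel]. split; [|exact IH].
  apply hadd_comm, hadd_rev, hadd_hmin.
Qed.

Lemma quot_up_sign_step a b : is_sign a = true -> is_sign b = true ->
  let u := if (a =? 0)%Z then b else (- a)%Z in
  flip b u = flip (- b) a /\ next_sign b u = u /\ next_sign (- b) a = (- u)%Z.
Proof. intros. sign_cases; vm_compute; auto. Qed.

Section QuotientsByXMinusOne.
Variable C : R.

Lemma xm1_rel_val_ge P : forall prev Q, xm1_rel prev P Q -> val_ge C prev ->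
  (forall x, In x P -> val_ge C x) -> forall y, In y Q -> val_ge C y.
Proof.
  induction P as [|x P IH]; intros prev Q H hprev hP y hy; [destruct H|].
  destruct Q as [|q Q]; [destruct hy|]. destruct H as [hx H].
  assert (val_ge C q) as hq.
  { apply val_ge_topp, (hadd_val_ge_l C _ prev x); auto with datatypes. }
  destruct hy as [<-|hy]; [exact hq|]. apply (IH q Q); auto with datatypes.
Qed.

Lemma xm1_rel_sign_at P : forall prev Q, xm1_rel prev P Q -> val_ge C prev ->
  (forall x, In x P -> val_ge C x) -> (forall y, In y Q -> val_ge C y) ->
  sign_xm1_rel (sign_at C prev) (map (sign_at C) P) (map (sign_at C) Q).
Proof.
  induction P as [|x P IH]; intros prev Q H hprev hP hQ; [destruct H|].
  destruct Q as [|q Q]; simpl in H |- *.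
  - destruct H as [-> ->]. auto.
  - destruct H as [hx H]. split.
    + rewrite <- sign_at_topp. apply sadd_sign_at; auto with datatypes.
      apply val_ge_topp. auto with datatypes.
    + apply IH; auto with datatypes.
Qed.

Lemma xm1_rel_changes P Q : xm1_rel Inf P Q -> (forall x, In x P -> val_ge C x) ->
  (exists x, In x P /\ sign_at C x <> 0%Z) ->
  (forall y, In y Q -> val_ge C y) /\ (exists y, In y Q /\ sign_at C y <> 0%Z) /\
  (changes_from (map (sign_at C) Q) 0 + 1 <= changes_from (map (sign_at C) P) 0)%nat.
Proof.
  intros H hP [x [hx hx0]].
  assert (hQ : forall y, In y Q -> val_ge C y) by exact (xm1_rel_val_ge P Inf Q H I hP).
  pose proof (xm1_rel_sign_at P Inf Q H I hP hQ) as HS.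
  assert (hQ0 : exists y, In y Q /\ sign_at C y <> 0%Z).
  { apply NNPP. intro hQ0. apply hx0.
    apply (sign_xm1_rel_zero _ _ HS); [|apply in_map; exact hx].
    intros s hs. apply in_map_iff in hs. destruct hs as [y [<- hy]].
    apply NNPP. intro hy0. eauto. }
  split; [exact hQ|]. split; [exact hQ0|].
  apply sign_xm1_rel_changes; auto using Forall_is_sign_sign_at.
  destruct hQ0 as [y [hy hy0]]. exists (sign_at C y). split; [apply in_map|]; auto.
Qed.

Lemma quot_up_val_ge P : forall prev, val_ge C prev -> (forall x, In x P -> val_ge C x) ->
  (forall y, In y (quot_up prev P) -> val_ge C y) /\ val_ge C (quot_up_last prev P).
Proof.
  induction P as [|x P IH]; intros prev hprev hP; simpl; [split; [tauto|auto]|].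
  assert (val_ge C (hmin (topp x) prev)) as h
    by (apply hmin_val_ge; [apply val_ge_topp|]; auto with datatypes).
  destruct (IH _ h) as [i1 i2]; [auto with datatypes|].
  split; [intros y [<-|hy]; auto|auto].
Qed.

Lemma quot_down_val_ge P : (forall x, In x P -> val_ge C x) ->
  forall y, In y (quot_down P) -> val_ge C y.
Proof.
  induction P as [|x P IH]; intros hP y hy; [destruct hy|].
  assert (hD : forall y, In y (quot_down P) -> val_ge C y) by auto with datatypes.
  destruct hy as [<-|hy]; [|auto].
  apply hmin_val_ge; [auto with datatypes|]. destruct (quot_down P); simpl; auto with datatypes.
Qed.

Lemma xm1_rel_quot_down_cons b P : (forall x, In x P -> val_ge C x) ->
  xm1_rel (Fin b C) (Fin b C :: P) (quot_down P).
Proof.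
  intro hP. destruct P as [|y P]; [simpl; auto|].
  pose proof (xm1_rel_quot_down (y :: P) ltac:(congruence)) as D.
  cbn [quot_down hd tl] in D |- *. cbn [xm1_rel]. split; [|exact D].
  apply hadd_absorb, val_ge_topp, (quot_down_val_ge (y :: P) hP). left; reflexivity.
Qed.

Lemma changes_quot_up P : forall prev, val_ge C prev -> (forall x, In x P -> val_ge C x) ->
  changes_from (map (sign_at C) (quot_up prev P)) (sign_at C prev) =
    changes_from (map (sign_at C) P) (- sign_at C prev) /\
  last_sign (map (sign_at C) (quot_up prev P)) (sign_at C prev) =
    (- last_sign (map (sign_at C) P) (- sign_at C prev))%Z /\
  sign_at C (quot_up_last prev P) = (- last_sign (map (sign_at C) P) (- sign_at C prev))%Z.
Proof.
  induction P as [|x P IH]; intros prev hprev hP; simpl; [lia|].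
  assert (hx : val_ge C (topp x)) by (apply val_ge_topp; auto with datatypes).
  assert (e : sign_at C (hmin (topp x) prev) =
    if (sign_at C x =? 0)%Z then sign_at C prev else (- sign_at C x)%Z).
  { rewrite sign_at_hmin, sign_at_topp by auto.
    destruct (Z.eqb_spec (sign_at C x) 0) as [->|]; [reflexivity|].
    destruct (Z.eqb_spec (- sign_at C x) 0); [lia|reflexivity]. }
  destruct (quot_up_sign_step (sign_at C x) (sign_at C prev)) as [u1 [u2 u3]];
    auto using is_sign_sign_at.
  rewrite <- e in u1, u2, u3. rewrite u1, u2, u3.
  destruct (IH (hmin (topp x) prev)) as [i1 [i2 i3]];
    [apply hmin_val_ge; auto with datatypes|auto with datatypes|].
  rewrite i1, i2, i3. auto.
Qed.

Lemma changes_quot_down P : (forall x, In x P -> val_ge C x) -> forall m,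
  changes_from (map (sign_at C) (quot_down P)) m = changes_from (map (sign_at C) P) m.
Proof.
  induction P as [|x P IH]; intros hP m; [reflexivity|].
  assert (hP' : forall x, In x P -> val_ge C x) by auto with datatypes.
  assert (hd_ge : val_ge C (hd Inf (quot_down P))).
  { destruct (quot_down P) eqn:E; simpl; [auto|].
    apply (quot_down_val_ge P hP'). rewrite E. left; auto. }
  cbn [quot_down map changes_from]. rewrite sign_at_hmin by auto with datatypes.
  destruct (Z.eqb_spec (sign_at C x) 0) as [->|].
  - assert (sign_at C (hd Inf (quot_down P)) = hd 0%Z (map (sign_at C) (quot_down P))) as ->
      by (destruct (quot_down P); reflexivity).
    change (changes_from (hd 0%Z (map (sign_at C) (quot_down P)) :: map (sign_at C) (quot_down P)) m
      = (flip m 0 + changes_from (map (sign_at C) P) (next_sign m 0))%nat).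
    rewrite changes_from_dup_hd, IH by auto. unfold flip, next_sign. rewrite Z.mul_0_r. reflexivity.
  - rewrite IH by auto. reflexivity.
Qed.

(* Cut [P] at its first sign change: [quot_up] reproduces the signs of the part before it
   negated, [quot_down] those of the part after it, so exactly that change is lost. *)
Lemma exists_xm1_quotient P : (forall x, In x P -> val_ge C x) ->
  (1 <= changes_from (map (sign_at C) P) 0)%nat ->
  exists Q, xm1_rel Inf P Q /\ (forall y, In y Q -> val_ge C y) /\
    (exists y, In y Q /\ sign_at C y <> 0%Z) /\
    (changes_from (map (sign_at C) Q) 0 + 1 = changes_from (map (sign_at C) P) 0)%nat.
Proof.
  intros hP hch.
  destruct (first_sign_change _ _ hch) as [e1 [sX [e2 [he [hc1 hneg]]]]].
  apply map_eq_app in he. destruct he as [P1 [P2' [-> [m1 m2]]]].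
  apply map_eq_cons in m2. destruct m2 as [X [P2 [-> [mX m2]]]].
  assert (hP1 : forall x, In x P1 -> val_ge C x) by (intros; apply hP; auto with datatypes).
  assert (hP2 : forall x, In x P2 -> val_ge C x) by (intros; apply hP; auto with datatypes).
  assert (hX : val_ge C X) by (apply hP; auto with datatypes).
  set (s := last_sign e1 0) in *.
  assert (is_sign s = true) as hs_sign.
  { unfold s. rewrite <- m1. apply is_sign_last_sign; [reflexivity|apply Forall_is_sign_sign_at]. }
  destruct (sign_mul_neg s sX hs_sign ltac:(subst sX; apply is_sign_sign_at) hneg) as [hs hsX].
  assert (hX0 : sign_at C X <> 0%Z) by lia.
  destruct (changes_quot_up P1 Inf I hP1) as [u1 [u2 u3]].
  cbn [sign_at] in u1, u2, u3. rewrite Z.opp_0, m1 in u1, u2, u3. fold s in u2, u3.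
  exists (quot_up Inf P1 ++ quot_down P2). split; [|split; [|split]].
  - apply xm1_rel_quot_up.
    assert (quot_up_last Inf P1 = X) as -> by (apply (sign_at_inj C); rewrite u3; lia).
    destruct (sign_at_neq0 C X hX0) as [b ->]. apply xm1_rel_quot_down_cons, hP2.
  - intros y hy. apply in_app_or in hy. destruct hy as [hy|hy].
    + apply (proj1 (quot_up_val_ge P1 Inf I hP1)), hy.
    + apply (quot_down_val_ge P2 hP2), hy.
  - destruct (last_sign_neq0_inv (map (sign_at C) (quot_up Inf P1)) 0) as [h|[z [hz hz0]]];
      [rewrite u2; lia|lia|].
    apply in_map_iff in hz. destruct hz as [y [<- hy]]. exists y. auto with datatypes.
  - rewrite !map_app, !changes_from_app, u1, u2, m1, hc1, changes_quot_down by auto.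
    cbn [map changes_from]. rewrite mX, hsX. fold s. unfold flip, next_sign.
    destruct (Z.ltb_spec (s * - s) 0); [|nia]. destruct (Z.eqb_spec (- s) 0); lia.
Qed.

End QuotientsByXMinusOne.

(** * Multiplicity *)

Definition nonzero_poly (p : list TR) : Prop := exists i, (i < length p)%nat /\ coef p i <> Inf.

Section InitialForms.
Variable r : R.

Lemma scaled_coefs_min_val k p : nonzero_poly p ->
  exists C, (forall x, In x (scaled_coefs r k p) -> val_ge C x) /\
    (exists x, In x (scaled_coefs r k p) /\ sign_at C x <> 0%Z).
Proof.
  intros [i [hi hci]]. apply exists_min_val.
  exists (tshift (INR i * r + k) (coef p i)). split.
  - apply In_scaled_coefs. eauto.
  - destruct (coef p i); simpl; congruence.
Qed.

Lemma nonzero_poly_sign_at C k q : (exists y, In y (scaled_coefs r k q) /\ sign_at C y <> 0%Z) ->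
  nonzero_poly q.
Proof.
  intros [y [hy hy0]]. apply In_scaled_coefs in hy. destruct hy as [i [hi ->]].
  exists i. split; [exact hi|]. intro hc. rewrite hc in hy0. apply hy0. reflexivity.
Qed.

Lemma is_root_iff_sign_changes p : nonzero_poly p ->
  is_root (Fin true r) p <-> (1 <= sign_changes (initial_form p r))%nat.
Proof.
  intro hp. destruct (scaled_coefs_min_val 0 p hp) as [C [hge hnz]].
  unfold is_root. rewrite peval_scaled_coefs, (initial_form_scaled_coefs r 0 p C hge hnz),
    sign_changes_changes_from.
  apply hsum_Inf_iff; [|exact hge|exact hnz].
  destruct hnz as [x [hx _]]. destruct (scaled_coefs r 0 p); [destruct hx|discriminate].
Qed.

Lemma sign_changes_quotient p q : pdiv_rel (Fin true r) p q -> nonzero_poly p ->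
  nonzero_poly q /\ (sign_changes (initial_form q r) + 1 <= sign_changes (initial_form p r))%nat.
Proof.
  intros hq hp. apply pdiv_rel_iff_xm1_rel in hq. destruct hq as [_ hq].
  destruct (scaled_coefs_min_val 0 p hp) as [C [hge hnz]].
  destruct (xm1_rel_changes C _ _ hq hge hnz) as [hQge [hQnz hle]].
  split; [exact (nonzero_poly_sign_at C r q hQnz)|].
  rewrite (initial_form_scaled_coefs r r q C hQge hQnz), (initial_form_scaled_coefs r 0 p C hge hnz),
    !sign_changes_changes_from.
  exact hle.
Qed.

Lemma exists_quotient_sign_changes p : nonzero_poly p -> is_root (Fin true r) p ->
  exists q, pdiv_rel (Fin true r) p q /\ nonzero_poly q /\
    (sign_changes (initial_form q r) + 1 = sign_changes (initial_form p r))%nat.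
Proof.
  intros hp hroot. destruct (scaled_coefs_min_val 0 p hp) as [C [hge hnz]].
  rewrite (is_root_iff_sign_changes p hp), (initial_form_scaled_coefs r 0 p C hge hnz),
    sign_changes_changes_from in hroot.
  destruct (exists_xm1_quotient C _ hge hroot) as [Q [hQ [hQge [hQnz hQc]]]].
  rewrite <- (scaled_coefs_unscale r r Q) in hQ, hQge, hQnz.
  exists (unscale r r Q). split; [|split].
  - apply pdiv_rel_iff_xm1_rel. split; [|exact hQ].
    destruct hQnz as [y [hy _]]. rewrite <- (length_scaled_coefs r r).
    destruct (scaled_coefs r r (unscale r r Q)); [destruct hy|simpl; lia].
  - exact (nonzero_poly_sign_at C r _ hQnz).
  - rewrite (initial_form_scaled_coefs r r _ C hQge hQnz), (initial_form_scaled_coefs r 0 p C hge hnz),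
      !sign_changes_changes_from, scaled_coefs_unscale.
    exact hQc.
Qed.

End InitialForms.

Lemma natmax_eq (M : nat -> Prop) m : M m -> (forall m', M m' -> (m' <= m)%nat) -> natmax M = m.
Proof.
  intros h1 h2. unfold natmax.
  destruct (epsilon_spec (inhabits 0%nat) (fun m => M m /\ forall m', M m' -> (m' <= m)%nat)
    (ex_intro _ m (conj h1 h2))) as [e1 e2].
  apply Nat.le_antisymm; auto.
Qed.

Lemma mult_fuel_sign_changes r n : forall p, length p = n -> nonzero_poly p ->
  mult_fuel n (Fin true r) p = sign_changes (initial_form p r).
Proof.
  induction n as [|n IH]; intros p hl hp.
  { destruct hp as [i [hi _]]. lia. }
  cbn [mult_fuel]. destruct excluded_middle_informative as [hroot|hroot].
  - destruct (exists_quotient_sign_changes r p hp hroot) as [q0 [hq0 [hq0nz hq0c]]].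
    assert (length q0 = n) as hl0 by (destruct hq0; lia).
    rewrite (natmax_eq _ (sign_changes (initial_form p r) - 1)); [lia| |].
    + exists q0. split; [exact hq0|]. rewrite IH by auto. lia.
    + intros m [q [hq ->]]. destruct (sign_changes_quotient r p q hq hp) as [hqnz hle].
      rewrite IH by (auto; destruct hq; lia). lia.
  - rewrite (is_root_iff_sign_changes r p hp) in hroot. lia.
Qed.

Theorem theoremA (p : list TR) (r : R) :
  (0 < length p)%nat ->
  (exists i, (i < length p)%nat /\ coef p i <> Inf) ->
  is_root (Fin true r) p ->
  mult (Fin true r) p = sign_changes (initial_form p r).
Proof.
  intros _ hp _. exact (mult_fuel_sign_changes r (length p) p eq_refl hp).
Qed.
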